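(* Let $G=(V,E)$ be a finite simple graph and let $C\subseteq V$. Let $x\in\{0,1\}^{V}$ and $F=\{v\in V\colon x_v=1\}$. Then $F$ is a fort of $G$ with $F\subseteq V\setminus\mathrm{cl}(C)$ if and only if $x$ satisfies: (a) $\sum_{v\in V}x_v\geq1$; (b) $x_u-x_v+\sum_{w\in N(u)\setminus\{v\}}x_w\geq0$ for all $v\in V$ and all $u\in N(v)$; (c) $x_v=0$ for all $v\in C$.
   Context: $N(u)$ denotes the neighborhood of $u$. A fort of $G$ is a non-empty set $F\subseteq V$ such that no vertex $u\in V\setminus F$ has exactly one neighbor in $F$. The closure $\mathrm{cl}(C)$ of $C$ is the set of filled vertices obtained by starting with the vertices of $C$ filled and repeatedly applying the standard color change rule (a filled vertex $u$ forces a non-filled vertex $v$ to become filled if $v$ is the only non-filled neighbor of $u$) until no more forces are possible. *)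

(* A finite simple graph is a symmetric irreflexive
   relation e on a finType T (vertex set V = T). *)
From mathcomp Require Import all_boot all_order all_algebra.
Set Implicit Arguments. Unset Strict Implicit. Unset Printing Implicit Defensive.

Section Graph.
Variables (T : finType) (e : rel T).

Definition nbhd (u : T) : {set T} := [set w | e u w].

Definition fort (F : {set T}) : Prop :=
  F != set0 /\ forall u, u \notin F -> #|nbhd u :&: F| != 1%N.

Definition force_step (S : {set T}) : {set T} :=
  S :|: [set v | [exists u, (u \in S) && (nbhd u :\: S == [set v])]].

(* closure: iterate until no more forces possible; since each nontrivial
   round adds a vertex, #|T| rounds suffice to reach the fixpoint *)
Definition cl (C : {set T}) : {set T} := iter #|T| force_step C.

End Graph.

(* Inequality (b) at an edge uv can
   only fail when u is outside F, v is in F and no other neighbour of u is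
   in F, i.e. exactly when u has v as its unique neighbour in F.  Finally, a
   set with no outside vertex having a unique neighbour in it is never
   entered by a force from outside (the forcing vertex would be such a
   vertex), so F avoids cl(C) as soon as it avoids C. *)

From mathcomp Require Import all_boot all_order all_algebra.
Set Implicit Arguments.
Unset Strict Implicit.
Unset Printing Implicit Defensive.

Import Order.TTheory GRing.Theory Num.Theory.
Local Open Scope ring_scope.

Lemma sum_indicator (R : pzSemiRingType) (T : finType) (A F : {set T}) :
  \sum_(w in A) ((w \in F)%:R : R) = #|A :&: F|%:R.
Proof.
rewrite (big_setID F) /= [X in _ + X]big1 ?addr0 => [|w /setDP[_ /negbTE->] //].
by rewrite -sumr_const; apply: eq_bigr => w /setIP[_ ->].
Qed.

Section Forcing.
Variables (T : finType) (e : rel T).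

Lemma subset_force_step (S : {set T}) : S \subset force_step e S.
Proof. exact: subsetUl. Qed.

Lemma subset_cl (C : {set T}) : C \subset cl e C.
Proof.
rewrite /cl; elim: #|T| => [|n IHn] //=.
exact: subset_trans IHn (subset_force_step _).
Qed.

Variable F : {set T}.
Hypothesis F_no_single_nbr : forall u, u \notin F -> #|nbhd e u :&: F| != 1%N.

Lemma force_step_disjoint (S : {set T}) :
  [disjoint S & F] -> [disjoint force_step e S & F].
Proof.
move=> SF; apply/pred0P => v /=; rewrite !inE andbC.
apply/andP => -[vF /orP[vS|/existsP[u /andP[uS /eqP uv]]]].
  by rewrite (disjointFl SF vF) in vS.
have uF : u \notin F by rewrite (disjointFr SF uS).
suff nuF : nbhd e u :&: F = [set v].
  by have := F_no_single_nbr uF; rewrite nuF cards1.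
apply/setP => w; rewrite in_setI in_set1; apply/andP/eqP => [[wu wF]|->].
  have : w \in nbhd e u :\: S by rewrite inE wu (disjointFl SF wF).
  by rewrite uv inE => /eqP.
by split=> //; have /setDP[] : v \in nbhd e u :\: S by rewrite uv set11.
Qed.

Lemma disjoint_cl (C : {set T}) : [disjoint cl e C & F] = [disjoint C & F].
Proof.
apply/idP/idP => [|CF]; first exact/disjointWl/subset_cl.
by rewrite /cl; elim: #|T| => [|n IHn] //=; apply: force_step_disjoint.
Qed.

End Forcing.

Section NeighbourInequality.
Variables (T : finType) (e : rel T) (F : {set T}).

Local Notation ineq v u :=
  (0 <= (u \in F)%:R - (v \in F)%:R + #|(nbhd e u :\ v) :&: F|%:R :> int).

Lemma neighbour_ineqE (u v : T) : v \in nbhd e u ->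
  ineq v u = ~~ [&& v \in F, u \notin F & nbhd e u :&: F == [set v]].
Proof.
move=> vu; case vF: (v \in F); case uF: (u \in F) => //=;
  rewrite ?subrr ?subr0 ?add0r; try by rewrite ?ler0n ?addr_ge0.
have nuF0 : nbhd e u :&: F != set0 by apply/set0Pn; exists v; rewrite inE vu vF.
rewrite addrC subr_ge0 ler1n card_gt0 setIDAC setD_eq0 subset1.
by rewrite (negbTE nuF0) orbF.
Qed.

Lemma neighbour_ineqsP : symmetric e ->
  (forall v u, u \in nbhd e v -> ineq v u) <->
  (forall u, u \notin F -> #|nbhd e u :&: F| != 1%N).
Proof.
move=> e_sym; have nbhdC u v : (u \in nbhd e v) = (v \in nbhd e u).
  by rewrite !inE e_sym.
split=> [ineqs u uF | single v u uv].
  apply/cards1P => -[v nuF]; have /setIP[vu vF] : v \in nbhd e u :&: F.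
    by rewrite nuF set11.
  have := ineqs v u; rewrite nbhdC => /(_ vu).
  by rewrite neighbour_ineqE // vF uF nuF eqxx.
rewrite neighbour_ineqE; last by rewrite -nbhdC.
by apply/and3P => -[_ uF /eqP nuF]; have := single u uF; rewrite nuF cards1.
Qed.

End NeighbourInequality.

Theorem theorem5p3 (T : finType) (e : rel T)
    (e_sym : symmetric e) (e_irr : irreflexive e)
    (C : {set T}) (x : T -> int) (x01 : forall v, x v = 0 \/ x v = 1) :
  (fort e [set v | x v == 1] /\ [set v | x v == 1] \subset ~: cl e C) <->
  [/\ 1 <= \sum_(v : T) x v,
      (forall v u, u \in nbhd e v ->
         0 <= x u - x v + \sum_(w in nbhd e u :\ v) x w)
    & (forall v, v \in C -> x v = 0)].
Proof.
set F := [set v | x v == 1].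
have xE w : x w = (w \in F)%:R by rewrite inE; case: (x01 w) => ->.
have sumE (A : {set T}) : \sum_(w in A) x w = #|A :&: F|%:R.
  by rewrite -sum_indicator; apply: eq_bigr => w _; rewrite xE.
have nonemptyE : (1 <= \sum_v x v) = (F != set0).
  rewrite -card_gt0 -(ler1n int) -[F]setTI -sumE.
  by congr (_ <= _); apply: eq_bigl => v; rewrite inE.
have ineqE v u : 0 <= x u - x v + \sum_(w in nbhd e u :\ v) x w =
    (0 <= (u \in F)%:R - (v \in F)%:R + #|(nbhd e u :\ v) :&: F|%:R :> int).
  by rewrite sumE !xE.
have ineqsP : (forall v u, u \in nbhd e v ->
                 0 <= x u - x v + \sum_(w in nbhd e u :\ v) x w) <->
              (forall u, u \notin F -> #|nbhd e u :&: F| != 1%N).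
  apply: iff_trans (neighbour_ineqsP F e_sym).
  by split=> ineqs v u /ineqs; rewrite ineqE.
have avoidCP : (forall v, v \in C -> x v = 0) <-> [disjoint C & F].
  split=> [x0 | CF v vC]; last by rewrite xE (disjointFr CF vC).
  by apply/pred0P => v /=; apply/andP => -[/x0 vx]; rewrite inE vx.
rewrite nonemptyE -disjoints_subset disjoint_sym.
split=> [[[F0 single] clF] | [F0 /ineqsP single /avoidCP CF]].
  by split=> //; [apply/ineqsP | apply/avoidCP; rewrite -(disjoint_cl single)].
by split; [split | rewrite disjoint_cl].
Qed.
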